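(* Let $g\in{\cal H}_d$. Call a compact set $V\subset{\bf C}^2$ admissible if $K\subset \mathrm{int}\,V$, $g(J^+\cap V)\subset J^+\cap V$ and $g^{-1}(J^-\cap V)\subset J^-\cap V$. For admissible $V$ define $$s^\pm(V)=\lim_{n\to\infty}\frac1n\log\max\{\|Dg^{\pm n}(p)\|:p\in J^\pm\cap V\}.$$ Then $s^+(V)$ and $s^-(V)$ do not depend on the choice of the admissible set $V$.
   Context: A generalized Hénon map is a map $g_i(z,w)=(w,P_i(w)+a_iz)$ of ${\bf C}^2$, where $P_i$ is a complex polynomial of degree $d_i\ge 2$ and $a_i\in{\bf C}\setminus\{0\}$. For $d\ge 2$, ${\cal H}_d$ denotes the set of all finite compositions $g=g_1\circ\cdots\circ g_m$ of generalized Hénon maps with $d_1\cdots d_m=d$. $K^\pm$ is the set of points whose forward ($+$) resp. backward ($-$) orbit under $g$ is bounded, $K=K^+\cap K^-$, $J^\pm=\partial K^\pm$. The limits defining $s^\pm(V)$ exist (submultiplicativity) and do not depend on the norm used. *)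

From Stdlib Require Import Reals List.
From Coquelicot Require Import Coquelicot.
Set Implicit Arguments.

Definition C2 := prod_NormedModule C_AbsRing C_NormedModule C_NormedModule.

(* A complex polynomial is given by its list of coefficients, lowest degree
   first: [c0; c1; ...; ck] represents c0 + c1 w + ... + ck w^k. *)
Definition peval (P : list C) (w : C) : C :=
  fold_right (fun c acc => Cplus c (Cmult w acc)) (RtoC 0) P.

Definition has_degree (P : list C) (k : nat) : Prop :=
  length P = S k /\ last P (RtoC 0) <> RtoC 0.

Definition henon (P : list C) (a : C) (p : C2) : C2 :=
  (snd p, Cplus (peval P (snd p)) (Cmult a (fst p))).

Definition henon_data (Pa : list C * C) : Prop :=
  (exists k, (2 <= k)%nat /\ has_degree (fst Pa) k) /\ snd Pa <> RtoC 0.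

Definition deg_of (P : list C) : nat := pred (length P).

(* g_1 o g_2 o ... o g_m for the list [(P_1,a_1); ...; (P_m,a_m)]. *)
Definition henon_comp (l : list (list C * C)) : C2 -> C2 :=
  fold_right (fun Pa f => fun p => henon (fst Pa) (snd Pa) (f p)) (fun p => p) l.

Definition in_Hd (d : nat) (g : C2 -> C2) : Prop :=
  exists l : list (list C * C),
    List.Forall henon_data l /\
    fold_right (fun Pa n => (deg_of (fst Pa) * n)%nat) 1%nat l = d /\
    (forall p, g p = henon_comp l p).

(* Set of points with bounded orbit under f (f = g gives K^+, f = g^{-1} gives K^-). *)
Definition bounded_orbit (f : C2 -> C2) (p : C2) : Prop :=
  exists M : R, forall n : nat, norm (Nat.iter n f p) <= M.

Definition boundary (A : C2 -> Prop) (p : C2) : Prop :=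
  forall eps : posreal,
    (exists q, ball p eps q /\ A q) /\ (exists q, ball p eps q /\ ~ A q).

Definition interior (A : C2 -> Prop) (p : C2) : Prop :=
  exists eps : posreal, forall q, ball p eps q -> A q.

Definition is_compact (V : C2 -> Prop) : Prop :=
  forall (I : Type) (U : I -> C2 -> Prop),
    (forall i, open (U i)) ->
    (forall p, V p -> exists i, U i p) ->
    exists l : list I, forall p, V p -> exists i, In i l /\ U i p.

Definition opnorm (L : C2 -> C2) : Rbar :=
  Lub_Rbar (fun r => exists v : C2, norm v <= 1 /\ r = norm (L v)).

Definition maxDer (f : C2 -> C2) (J V : C2 -> Prop) (n : nat) : R :=
  real (Lub_Rbar (fun r => exists p, J p /\ V p /\
          exists L : C2 -> C2,
            filterdiff (K := C_AbsRing) (Nat.iter n f) (locally p) L /\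
            r = real (opnorm L))).

Definition s_exp (f : C2 -> C2) (J V : C2 -> Prop) : Rbar :=
  Lim_seq (fun n => / INR n * ln (maxDer f J V n)).

Definition Kplus (g : C2 -> C2) : C2 -> Prop := bounded_orbit g.
Definition Kminus (ginv : C2 -> C2) : C2 -> Prop := bounded_orbit ginv.
Definition Kset (g ginv : C2 -> C2) (p : C2) : Prop := Kplus g p /\ Kminus ginv p.
Definition Jplus (g : C2 -> C2) : C2 -> Prop := boundary (Kplus g).
Definition Jminus (ginv : C2 -> C2) : C2 -> Prop := boundary (Kminus ginv).

Definition admissible (g ginv : C2 -> C2) (V : C2 -> Prop) : Prop :=
  is_compact V /\
  (forall p, Kset g ginv p -> interior V p) /\
  (forall p, Jplus g p -> V p -> Jplus g (g p) /\ V (g p)) /\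
  (forall p, Jminus ginv p -> V p -> Jminus ginv (ginv p) /\ V (ginv p)).

Definition splus (g ginv : C2 -> C2) (V : C2 -> Prop) : Rbar :=
  s_exp g (Jplus g) V.
Definition sminus (g ginv : C2 -> C2) (V : C2 -> Prop) : Rbar :=
  s_exp ginv (Jminus ginv) V.

(* Every orbit in J ∩ V1 has a cluster point in V1 whose forward and backward
   orbits are bounded, i.e. a point of K, which lies in the interior of V2.
   Continuity of the iterates and compactness of V1 give a uniform N with
   g^N (J ∩ V1) ⊆ J ∩ V2, and the chain rule then yields
   max_{J ∩ V1} |Dg^(n+N)| <= M^N max_{J ∩ V2} |Dg^n|, and symmetrically.
   A composition of Hénon maps has an invertible derivative, so on a bounded
   set m |v| <= |Dg v| <= M |v| with 0 < m; hence both maxima lie in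
   [m^n, M^n], their logarithms are O(n), and an index shift plus an additive
   constant does not change (1/n) log. The same argument applies to g^-1. *)
From Stdlib Require Import Reals List Lra Classical Lia.
From Coquelicot Require Import Coquelicot.
Open Scope R_scope.

(** * Norms and derivatives on C^2 *)

Lemma norm_C2 (p : C2) : norm p = sqrt (Cmod (fst p) ^ 2 + Cmod (snd p) ^ 2).
Proof. reflexivity. Qed.

Lemma norm_fst_le (p : C2) : Cmod (fst p) <= norm p.
Proof.
  rewrite norm_C2, <- (sqrt_pow2 (Cmod (fst p))) at 1 by apply Cmod_ge_0.
  apply sqrt_le_1_alt. pose proof (pow2_ge_0 (Cmod (snd p))). lra.
Qed.

Lemma norm_snd_le (p : C2) : Cmod (snd p) <= norm p.
Proof.
  rewrite norm_C2, <- (sqrt_pow2 (Cmod (snd p))) at 1 by apply Cmod_ge_0.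
  apply sqrt_le_1_alt. pose proof (pow2_ge_0 (Cmod (fst p))). lra.
Qed.

Lemma norm_C2_le (p : C2) : norm p <= Cmod (fst p) + Cmod (snd p).
Proof.
  pose proof (Cmod_ge_0 (fst p)). pose proof (Cmod_ge_0 (snd p)).
  rewrite norm_C2, <- (sqrt_pow2 (Cmod (fst p) + Cmod (snd p))) by lra.
  apply sqrt_le_1_alt. nra.
Qed.

Lemma norm_scal_C2 (k : C) (p : C2) : norm (scal k p) = Cmod k * norm p.
Proof.
  rewrite !norm_C2. change (fst (scal k p)) with (Cmult k (fst p)).
  change (snd (scal k p)) with (Cmult k (snd p)). rewrite !Cmod_mult.
  replace ((Cmod k * Cmod (fst p)) ^ 2 + (Cmod k * Cmod (snd p)) ^ 2)
    with (Cmod k ^ 2 * (Cmod (fst p) ^ 2 + Cmod (snd p) ^ 2)) by ring.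
  rewrite sqrt_mult_alt, sqrt_pow2 by (apply pow2_ge_0 || apply Cmod_ge_0). reflexivity.
Qed.

Lemma norm_C2_e1 : norm ((RtoC 1, RtoC 0) : C2) = 1.
Proof.
  rewrite norm_C2; simpl fst; simpl snd. rewrite Cmod_1, Cmod_0.
  replace (1 ^ 2 + 0 ^ 2) with 1 by ring. apply sqrt_1.
Qed.

Lemma filterdiff_zero_fun (x : C2) (D : C2 -> C2) :
  filterdiff (fun _ : C2 => zero : C2) (locally x) D -> forall v, D v = zero.
Proof.
  intros [D_lin D_domin] v. apply norm_eq_zero, Rle_antisym; [|apply norm_ge_0].
  (* Test the o(|y - x|) bound along the ray [y = x + t v], [t] small. *)
  assert (small : forall eps : posreal, norm (D v) <= eps * norm v).
  { intro eps.
    destruct (D_domin x (fun P HP => HP) eps) as [d D_small].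
    pose proof (norm_ge_0 v).
    set (t := d / (2 * (norm v + 1))).
    assert (t_pos : 0 < t) by (apply Rdiv_lt_0_compat; [apply cond_pos | lra]).
    assert (Ct : Cmod (RtoC t) = t) by (rewrite Cmod_R; apply Rabs_pos_eq; lra).
    assert (step : minus (plus x (scal (RtoC t) v)) x = scal (RtoC t) v).
    { unfold minus. rewrite plus_comm, plus_assoc, plus_opp_l. apply plus_zero_l. }
    assert (near : ball x d (plus x (scal (RtoC t) v))).
    { apply norm_compat1. rewrite step, norm_scal_C2, Ct.
      apply Rle_lt_trans with (t * (norm v + 1)); [apply Rmult_le_compat_l; lra|].
      unfold t. pose proof (cond_pos d). field_simplify; lra. }
    pose proof (D_small _ near) as bound. simpl in bound.
    rewrite step, minus_eq_zero, (linear_scal D D_lin) in bound. unfold minus in bound.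
    rewrite plus_zero_l, norm_opp, !norm_scal_C2, Ct in bound.
    apply Rmult_le_reg_l with t; lra. }
  destruct (Req_dec (norm v) 0) as [v0|v0].
  - specialize (small (mkposreal 1 Rlt_0_1)). simpl in small. rewrite v0 in small. lra.
  - apply Rnot_lt_le. intro Dv_pos. pose proof (norm_ge_0 v).
    assert (eps_pos : 0 < norm (D v) / (2 * norm v)) by (apply Rdiv_lt_0_compat; lra).
    specialize (small (mkposreal _ eps_pos)). simpl in small.
    replace (norm (D v) / (2 * norm v) * norm v) with (norm (D v) / 2) in small by (field; lra).
    lra.
Qed.

Lemma filterdiff_unique (f : C2 -> C2) (x : C2) (L1 L2 : C2 -> C2) :
  filterdiff f (locally x) L1 -> filterdiff f (locally x) L2 -> forall v, L1 v = L2 v.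
Proof.
  intros f_L1 f_L2 v.
  assert (zero_L : filterdiff (fun _ : C2 => zero : C2) (locally x) (fun v => minus (L1 v) (L2 v))).
  { apply filterdiff_ext with (fun y => minus (f y) (f y));
      [intro; apply (minus_eq_zero (G := NormedModule.AbelianGroup C_AbsRing C2))|].
    now apply filterdiff_minus_fct. }
  apply (plus_reg_r (opp (L2 v))). rewrite plus_opp_r. exact (filterdiff_zero_fun x _ zero_L v).
Qed.

Lemma Lub_Rbar_le_real (E : R -> Prop) (B : R) :
  (exists r, E r) -> (forall r, E r -> r <= B) ->
  is_finite (Lub_Rbar E) /\ real (Lub_Rbar E) <= B.
Proof.
  intros [r0 E_r0] E_le. destruct (Lub_Rbar_correct E) as [ub least].
  assert (lo : Rbar_le r0 (Lub_Rbar E)) by now apply ub.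
  assert (hi : Rbar_le (Lub_Rbar E) B) by now apply least.
  destruct (Lub_Rbar E); simpl in *; easy.
Qed.

Lemma le_real_Lub_Rbar (E : R -> Prop) (r : R) :
  is_finite (Lub_Rbar E) -> E r -> r <= real (Lub_Rbar E).
Proof.
  intros fin E_r. destruct (Lub_Rbar_correct E) as [ub _].
  specialize (ub r E_r). rewrite <- fin in ub. exact ub.
Qed.

Lemma opnorm_le (L : C2 -> C2) (B : R) : 0 <= B ->
  (forall v, norm (L v) <= B * norm v) -> is_finite (opnorm L) /\ real (opnorm L) <= B.
Proof.
  intros B_ge0 L_le. apply Lub_Rbar_le_real.
  - exists (norm (L zero)), zero. rewrite norm_zero. split; [lra | reflexivity].
  - intros r [v [v_le ->]]. specialize (L_le v). nra.
Qed.

Lemma norm_le_opnorm (L : C2 -> C2) (v : C2) : is_linear L -> is_finite (opnorm L) ->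
  norm (L v) <= real (opnorm L) * norm v.
Proof.
  intros L_lin fin. destruct (Req_dec (norm v) 0) as [v0|v0].
  - apply norm_eq_zero in v0. subst v. rewrite (linear_zero L L_lin), !norm_zero. lra.
  - pose proof (norm_ge_0 v).
    set (k := RtoC (/ norm v)).
    assert (Ck : Cmod k = / norm v)
      by (unfold k; rewrite Cmod_R; apply Rabs_pos_eq, Rlt_le, Rinv_0_lt_compat; lra).
    assert (unit : norm (scal k v) = 1) by (rewrite norm_scal_C2, Ck; field; lra).
    assert (bound : norm (L (scal k v)) <= real (opnorm L)).
    { apply le_real_Lub_Rbar; [exact fin|]. exists (scal k v). split; [lra | reflexivity]. }
    rewrite (linear_scal L L_lin), norm_scal_C2, Ck in bound.
    apply Rmult_le_reg_l with (/ norm v); [apply Rinv_0_lt_compat; lra|].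
    replace (/ norm v * (real (opnorm L) * norm v)) with (real (opnorm L)) by (field; lra). lra.
Qed.

Lemma opnorm_ge (L : C2 -> C2) (m : R) : is_finite (opnorm L) ->
  (forall v, m * norm v <= norm (L v)) -> m <= real (opnorm L).
Proof.
  intros fin L_ge. specialize (L_ge (RtoC 1, RtoC 0)). rewrite norm_C2_e1, Rmult_1_r in L_ge.
  eapply Rle_trans; [exact L_ge|]. apply le_real_Lub_Rbar; [exact fin|].
  eexists. split; [rewrite norm_C2_e1; lra | reflexivity].
Qed.

(** * Hénon maps *)

(* [peval_deriv P] is the derivative of [peval P], computed along the Horner
   recursion [peval (c :: P) w = c + w * peval P w]. *)
Fixpoint peval_deriv (P : list C) (w : C) : C :=
  match P with
  | nil => RtoC 0
  | _ :: P' => Cplus (peval P' w) (Cmult w (peval_deriv P' w))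
  end.

Lemma C_mult_comm : forall x y : C_AbsRing, mult x y = mult y x.
Proof. intros; apply Cmult_comm. Qed.

Lemma is_linear_C_id :
  is_linear (K := C_AbsRing) (U := C_NormedModule) (V := AbsRing_NormedModule C_AbsRing) (fun w => w).
Proof.
  split; try reflexivity. exists 1. split; [lra|]. intro x. change (Cmod x <= 1 * Cmod x). lra.
Qed.

Lemma is_linear_fst : is_linear (K := C_AbsRing) (U := C2) (V := C_NormedModule) (fun p => fst p).
Proof.
  split; try reflexivity. exists 1. split; [lra|]. intro x. rewrite Rmult_1_l. apply norm_fst_le.
Qed.

Lemma is_linear_snd : is_linear (K := C_AbsRing) (U := C2) (V := C_NormedModule) (fun p => snd p).
Proof.
  split; try reflexivity. exists 1. split; [lra|]. intro x. rewrite Rmult_1_l. apply norm_snd_le.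
Qed.

Lemma is_linear_pair : is_linear (K := C_AbsRing) (U := C2) (V := C2) (fun p => (fst p, snd p)).
Proof. split; try reflexivity. exists 1. split; [lra|]. intro x. rewrite Rmult_1_l. apply Rle_refl. Qed.

Lemma peval_filterdiff (P : list C) (w0 : C) :
  filterdiff (K := C_AbsRing) (U := C_NormedModule) (V := C_NormedModule)
    (peval P) (locally w0) (fun v => Cmult v (peval_deriv P w0)).
Proof.
  induction P as [|c P IH]; simpl.
  - eapply filterdiff_ext_lin.
    + apply (filterdiff_const (K := C_AbsRing) (U := C_NormedModule) (V := C_NormedModule) (RtoC 0)).
    + intro y. change (RtoC 0 = Cmult y (RtoC 0)). ring.
  - eapply filterdiff_ext_lin.
    + apply filterdiff_ext with (f := fun w : C_NormedModule =>
        plus (c : C_NormedModule) (scal (K := C_AbsRing) (w : C_AbsRing) (peval P w : C_NormedModule)));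
        [reflexivity|].
      apply filterdiff_plus_fct; [apply filterdiff_const|].
      apply (filterdiff_scal_fct (K := C_AbsRing) (U := C_NormedModule) (V := C_NormedModule)
               w0 (fun w => w) (peval P)); [apply C_mult_comm | | exact IH].
      apply filterdiff_linear, is_linear_C_id.
    + intro y. simpl.
      change (Cplus (RtoC 0) (Cplus (Cmult y (peval P w0)) (Cmult w0 (Cmult y (peval_deriv P w0))))
        = Cmult y (Cplus (peval P w0) (Cmult w0 (peval_deriv P w0)))). ring.
Qed.

Definition dhenon (D a : C) (v : C2) : C2 :=
  (snd v, Cplus (Cmult (snd v) D) (Cmult a (fst v))).

Lemma henon_filterdiff (P : list C) (a : C) (q : C2) :
  filterdiff (K := C_AbsRing) (U := C2) (V := C2) (henon P a) (locally q)
    (dhenon (peval_deriv P (snd q)) a).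
Proof.
  apply filterdiff_ext with (f := fun y : C2 => (fun u v => (u, v) : C2) (snd y)
    (plus (peval P (snd y) : C_NormedModule) (scal (K := C_AbsRing) a (fst y : C_NormedModule))));
    [reflexivity|].
  apply filterdiff_ext_lin with (l1 := fun y : C2 => (fun u v => (u, v) : C2) (snd y)
    (plus (Cmult (snd y) (peval_deriv P (snd q)) : C_NormedModule)
          (scal (K := C_AbsRing) a (fst y : C_NormedModule)))); [|reflexivity].
  apply (filterdiff_comp'_2 (K := C_AbsRing) (T := C2) (U := C_NormedModule) (V := C_NormedModule)
           (W := C2)).
  - apply filterdiff_linear, is_linear_snd.
  - apply filterdiff_plus_fct.
    + apply (filterdiff_comp' (K := C_AbsRing) (U := C2) (V := C_NormedModule) (W := C_NormedModule)
               (fun p => snd p) (peval P) q (fun p => snd p) (fun v => Cmult v (peval_deriv P (snd q)))).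
      * apply filterdiff_linear, is_linear_snd.
      * apply peval_filterdiff.
    + apply (filterdiff_comp' (K := C_AbsRing) (U := C2) (V := C_NormedModule) (W := C_NormedModule)
               (fun p => fst p) (fun x => scal a x) q (fun p => fst p) (fun x => scal a x)).
      * apply filterdiff_linear, is_linear_fst.
      * apply (filterdiff_scal_r (K := C_AbsRing) (V := C_NormedModule)), C_mult_comm.
  - apply filterdiff_linear, is_linear_pair.
Qed.

Lemma peval_bound (P : list C) (r : R) : 0 <= r -> exists B, 0 <= B /\
  forall w, Cmod w <= r -> Cmod (peval P w) <= B /\ Cmod (peval_deriv P w) <= B.
Proof.
  intros r_ge0. induction P as [|c P [B [B_ge0 IH]]].
  - exists 0. split; [lra|]. intros w _. simpl. rewrite Cmod_0. lra.
  - exists (Cmod c + B + r * B). pose proof (Cmod_ge_0 c).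
    split; [nra|]. intros w w_le. destruct (IH w w_le) as [P_le dP_le]. pose proof (Cmod_ge_0 w).
    assert (Cmod w * Cmod (peval P w) <= r * B) by (apply Rmult_le_compat; auto using Cmod_ge_0).
    assert (Cmod w * Cmod (peval_deriv P w) <= r * B) by (apply Rmult_le_compat; auto using Cmod_ge_0).
    simpl. split; eapply Rle_trans; try apply Cmod_triangle; rewrite Cmod_mult; lra.
Qed.

Lemma henon_norm_le (P : list C) (a : C) (r B : R) (q : C2) :
  norm q <= r -> (forall w, Cmod w <= r -> Cmod (peval P w) <= B) ->
  norm (henon P a q) <= r + B + Cmod a * r.
Proof.
  intros q_le P_le. pose proof (norm_fst_le q). pose proof (norm_snd_le q).
  destruct q as [z w]; simpl in *.
  assert (Cmod (peval P w) <= B) by (apply P_le; lra). pose proof (Cmod_ge_0 a).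
  assert (Cmod a * Cmod z <= Cmod a * r) by (apply Rmult_le_compat_l; lra).
  eapply Rle_trans; [apply norm_C2_le|]. simpl.
  pose proof (Cmod_triangle (peval P w) (Cmult a z)). rewrite Cmod_mult in *. lra.
Qed.

Lemma dhenon_pinched (D a : C) (B : R) (v : C2) : a <> RtoC 0 -> Cmod D <= B ->
  / (1 + (1 + B) / Cmod a) * norm v <= norm (dhenon D a v) <= (1 + B + Cmod a) * norm v.
Proof.
  intros a_nz D_le. assert (a_pos : 0 < Cmod a) by now apply Cmod_gt_0.
  destruct v as [v1 v2]. unfold dhenon; simpl fst; simpl snd.
  set (w := Cplus (Cmult v2 D) (Cmult a v1)).
  pose proof (norm_fst_le (v1, v2)) as V1. pose proof (norm_snd_le (v1, v2)) as V2.
  pose proof (norm_fst_le (v2, w)) as W1. pose proof (norm_snd_le (v2, w)) as W2. simpl in *.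
  pose proof (Cmod_ge_0 D). pose proof (Cmod_ge_0 v1). pose proof (Cmod_ge_0 v2).
  set (nv := norm ((v1, v2) : C2)) in *. set (nw := norm ((v2, w) : C2)) in *.
  assert (D_v2 : Cmod v2 * Cmod D <= Cmod v2 * B) by (apply Rmult_le_compat_l; lra).
  split.
  - assert (a_v1 : Cmod a * Cmod v1 <= nw + nw * B).
    { rewrite <- Cmod_mult. replace (Cmult a v1) with (Cminus w (Cmult v2 D)) by (unfold w; ring).
      unfold Cminus. eapply Rle_trans; [apply Cmod_triangle|]. rewrite Cmod_opp, Cmod_mult.
      assert (Cmod v2 * B <= nw * B) by (apply Rmult_le_compat_r; lra). lra. }
    assert (v1_le : Cmod v1 <= (1 + B) / Cmod a * nw).
    { apply Rmult_le_reg_l with (Cmod a); [exact a_pos|].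
      replace (Cmod a * ((1 + B) / Cmod a * nw)) with (nw + nw * B) by (field; lra). exact a_v1. }
    assert (nv_le : nv <= (1 + (1 + B) / Cmod a) * nw).
    { eapply Rle_trans; [apply norm_C2_le|]. simpl. lra. }
    assert (0 <= (1 + B) / Cmod a) by (apply Rdiv_le_0_compat; lra).
    assert (k_pos : 0 < 1 + (1 + B) / Cmod a) by lra.
    apply Rmult_le_reg_l with (1 + (1 + B) / Cmod a); [exact k_pos|].
    rewrite <- Rmult_assoc, Rinv_r by lra. lra.
  - eapply Rle_trans; [apply norm_C2_le|]. simpl.
    pose proof (Cmod_triangle (Cmult v2 D) (Cmult a v1)) as tri. rewrite !Cmod_mult in tri.
    assert (Cmod v2 * B <= nv * B) by (apply Rmult_le_compat_r; lra).
    assert (Cmod a * Cmod v1 <= Cmod a * nv) by (apply Rmult_le_compat_l; lra).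
    fold w in tri. lra.
Qed.

Definition diff_pinched (f : C2 -> C2) (q : C2) (m M : R) : Prop :=
  exists L, filterdiff f (locally q) L /\ forall v, m * norm v <= norm (L v) <= M * norm v.

Definition locally_pinched (f : C2 -> C2) : Prop :=
  (forall r, exists r', forall q, norm q <= r -> norm (f q) <= r') /\
  (forall r, exists m M, 0 < m /\ 0 < M /\ forall q, norm q <= r -> diff_pinched f q m M).

Lemma diff_pinched_ext (f h : C2 -> C2) (q : C2) (m M : R) :
  (forall y, f y = h y) -> diff_pinched f q m M -> diff_pinched h q m M.
Proof. intros f_h [L [f_L L_bd]]. exists L. split; [now apply filterdiff_ext with f | exact L_bd]. Qed.

Lemma diff_pinched_comp (f h : C2 -> C2) (q : C2) (m1 M1 m2 M2 : R) : 0 <= m2 -> 0 <= M2 ->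
  diff_pinched f q m1 M1 -> diff_pinched h (f q) m2 M2 ->
  diff_pinched (fun y => h (f y)) q (m2 * m1) (M2 * M1).
Proof.
  intros m2_ge0 M2_ge0 [L1 [f_L1 L1_bd]] [L2 [h_L2 L2_bd]].
  exists (fun v => L2 (L1 v)). split; [now apply filterdiff_comp'|].
  intro v. destruct (L1_bd v), (L2_bd (L1 v)). rewrite !Rmult_assoc. split.
  - eapply Rle_trans; [apply Rmult_le_compat_l|]; eassumption.
  - eapply Rle_trans; [|apply Rmult_le_compat_l]; eassumption.
Qed.

Lemma diff_pinched_derivative (f : C2 -> C2) (q : C2) (m M : R) (L : C2 -> C2) :
  diff_pinched f q m M -> filterdiff f (locally q) L ->
  forall v, m * norm v <= norm (L v) <= M * norm v.
Proof.
  intros [L0 [f_L0 L0_bd]] f_L v. rewrite <- (filterdiff_unique f q L0 L f_L0 f_L v). apply L0_bd.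
Qed.

Lemma locally_pinched_ext (f h : C2 -> C2) :
  (forall y, f y = h y) -> locally_pinched f -> locally_pinched h.
Proof.
  intros f_h [f_bd f_diff]. split; intro r.
  - destruct (f_bd r) as [r' f_le]. exists r'. intros q q_le. rewrite <- f_h. auto.
  - destruct (f_diff r) as [m [M [m_pos [M_pos f_pin]]]]. exists m, M. do 2 (split; [assumption|]).
    intros q q_le. apply diff_pinched_ext with f; auto.
Qed.

Lemma locally_pinched_comp (f h : C2 -> C2) :
  locally_pinched f -> locally_pinched h -> locally_pinched (fun y => h (f y)).
Proof.
  intros [f_bd f_diff] [h_bd h_diff]. split; intro r; destruct (f_bd r) as [r1 f_r1].
  - destruct (h_bd r1) as [r2 h_r2]. exists r2. auto.
  - destruct (f_diff r) as [m1 [M1 [m1_pos [M1_pos f_pin]]]].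
    destruct (h_diff r1) as [m2 [M2 [m2_pos [M2_pos h_pin]]]].
    exists (m2 * m1), (M2 * M1). split; [nra|]. split; [nra|].
    intros q q_le. apply diff_pinched_comp; auto; lra.
Qed.

Lemma locally_pinched_linear_isometry (f : C2 -> C2) :
  is_linear f -> (forall v, norm (f v) = norm v) -> locally_pinched f.
Proof.
  intros f_lin f_iso. split; intro r.
  - exists r. intros q. now rewrite f_iso.
  - exists 1, 1. do 2 (split; [lra|]). intros q _. exists f.
    split; [now apply filterdiff_linear|]. intro v. rewrite f_iso. lra.
Qed.

Lemma locally_pinched_id : locally_pinched (fun y => y).
Proof.
  apply locally_pinched_linear_isometry; [|reflexivity].
  split; try reflexivity. exists 1. split; [lra|]. intro. lra.
Qed.

Definition swap2 (p : C2) : C2 := (snd p, fst p).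

Lemma norm_swap2 (v : C2) : norm (swap2 v) = norm v.
Proof. rewrite !norm_C2. simpl. now rewrite Rplus_comm. Qed.

Lemma locally_pinched_swap2 : locally_pinched swap2.
Proof.
  apply locally_pinched_linear_isometry; [|exact norm_swap2].
  split; try reflexivity. exists 1. split; [lra|]. intro. rewrite norm_swap2. lra.
Qed.

Lemma locally_pinched_henon (P : list C) (a : C) : a <> RtoC 0 -> locally_pinched (henon P a).
Proof.
  intros a_nz. assert (a_pos : 0 < Cmod a) by now apply Cmod_gt_0.
  split; intro r; destruct (peval_bound P (Rmax r 0) (Rmax_r r 0)) as [B [B_ge0 P_bd]];
    assert (r_le : forall q : C2, norm q <= r -> norm q <= Rmax r 0)
      by (intros; eapply Rle_trans; [eassumption | apply Rmax_l]).
  - exists (Rmax r 0 + B + Cmod a * Rmax r 0). intros q q_le.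
    apply henon_norm_le; [now apply r_le | now intros w w_le; apply P_bd].
  - exists (/ (1 + (1 + B) / Cmod a)), (1 + B + Cmod a).
    assert (0 <= (1 + B) / Cmod a) by (apply Rdiv_le_0_compat; lra).
    split; [apply Rinv_0_lt_compat; lra | split; [lra|]].
    intros q q_le. exists (dhenon (peval_deriv P (snd q)) a).
    split; [apply henon_filterdiff|]. intro v. apply dhenon_pinched; [exact a_nz|].
    apply P_bd. pose proof (norm_snd_le q). pose proof (r_le q q_le). lra.
Qed.

(* The inverse [(x, y) |-> ((y - P x) / a, x)] of [henon P a] is a Hénon map
   conjugated by the coordinate swap. *)
Definition henon_inv (P : list C) (a : C) (p : C2) : C2 :=
  swap2 (henon (map (Cmult (Copp (Cinv a))) P) (Cinv a) (swap2 p)).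

Lemma peval_map_mult (k : C) (P : list C) (w : C) :
  peval (map (Cmult k) P) w = Cmult k (peval P w).
Proof. induction P as [|c P IH]; simpl; [ring | rewrite IH; ring]. Qed.

Lemma henon_henon_inv (P : list C) (a : C) (p : C2) : a <> RtoC 0 -> henon P a (henon_inv P a p) = p.
Proof.
  intros a_nz. destruct p as [x y]. unfold henon_inv, henon, swap2; simpl.
  rewrite peval_map_mult. f_equal. field. exact a_nz.
Qed.

Lemma Cinv_neq_0 (a : C) : a <> RtoC 0 -> Cinv a <> RtoC 0.
Proof.
  intros a_nz inv0. assert (E : Cmult a (Cinv a) = RtoC 1) by now apply Cinv_r.
  rewrite inv0, Cmult_0_r in E. injection E. lra.
Qed.

Lemma locally_pinched_henon_inv (P : list C) (a : C) : a <> RtoC 0 -> locally_pinched (henon_inv P a).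
Proof.
  intros a_nz. unfold henon_inv.
  apply (locally_pinched_comp (fun y => henon _ _ (swap2 y)) swap2); [|exact locally_pinched_swap2].
  apply (locally_pinched_comp swap2); [exact locally_pinched_swap2|].
  apply locally_pinched_henon, Cinv_neq_0, a_nz.
Qed.

Fixpoint henon_comp_inv (l : list (list C * C)) (p : C2) : C2 :=
  match l with
  | nil => p
  | Pa :: l' => henon_comp_inv l' (henon_inv (fst Pa) (snd Pa) p)
  end.

Lemma henon_comp_inv_r (l : list (list C * C)) (p : C2) :
  List.Forall henon_data l -> henon_comp l (henon_comp_inv l p) = p.
Proof.
  intros l_data. revert p. induction l_data as [|Pa l Pa_data _ IH]; intro p; simpl; [reflexivity|].
  rewrite IH. apply henon_henon_inv, Pa_data.
Qed.

Lemma locally_pinched_henon_comp (l : list (list C * C)) :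
  List.Forall henon_data l -> locally_pinched (henon_comp l) /\ locally_pinched (henon_comp_inv l).
Proof.
  intros l_data. induction l_data as [|Pa l Pa_data _ [IH IHinv]]; simpl.
  - split; exact locally_pinched_id.
  - split.
    + apply (locally_pinched_comp (henon_comp l)); [exact IH|]. apply locally_pinched_henon, Pa_data.
    + apply (locally_pinched_comp (henon_inv _ _)); [|exact IHinv].
      apply locally_pinched_henon_inv, Pa_data.
Qed.

Lemma in_Hd_locally_pinched (d : nat) (g ginv : C2 -> C2) :
  in_Hd d g -> (forall p, ginv (g p) = p /\ g (ginv p) = p) ->
  locally_pinched g /\ locally_pinched ginv.
Proof.
  intros [l [l_data [_ g_l]]] g_inv.
  destruct (locally_pinched_henon_comp l l_data) as [comp_pin comp_inv_pin]. split.
  - apply locally_pinched_ext with (henon_comp l); [intro y; now rewrite g_l | exact comp_pin].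
  - apply locally_pinched_ext with (henon_comp_inv l); [|exact comp_inv_pin].
    (* [ginv] is also a left inverse of [g], so it agrees with the right inverse. *)
    intro y. rewrite <- (henon_comp_inv_r l y l_data) at 2. rewrite <- g_l. symmetry. apply g_inv.
Qed.

Lemma locally_pinched_continuous (f : C2 -> C2) : locally_pinched f -> forall x, continuous f x.
Proof.
  intros [_ f_diff] x. destruct (f_diff (norm x)) as [m [M [_ [_ f_pin]]]].
  destruct (f_pin x (Rle_refl _)) as [L [f_L _]].
  apply (filterdiff_continuous (K := C_AbsRing) (U := C2) (V := C2)). now exists L.
Qed.

(** * Compactness and orbits *)

Lemma ball_norm_le (x y : C2) (e : posreal) :
  ball x e y -> norm y <= norm x + norm_factor (K := C_AbsRing) (V := C2) * e.
Proof.
  intro xy. pose proof (norm_compat2 x y e xy). pose proof (norm_triangle_inv y x).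
  pose proof (Rle_abs (norm y - norm x)). lra.
Qed.

Lemma list_max_in (l : list nat) (n : nat) : In n l -> (n <= list_max l)%nat.
Proof.
  intro n_in. assert (all_le : List.Forall (fun k => (k <= list_max l)%nat) l) by now apply list_max_le.
  rewrite List.Forall_forall in all_le. now apply all_le.
Qed.

Lemma compact_uniform_index (V : C2 -> Prop) (P : nat -> C2 -> Prop) :
  is_compact V -> (forall N N' y, (N <= N')%nat -> P N y -> P N' y) ->
  (forall x, V x -> exists (e : posreal) (N : nat), forall y, ball x e y -> P N y) ->
  exists N, forall y, V y -> P N y.
Proof.
  intros V_cpt P_mono P_loc.
  set (I := {i : C2 * posreal * nat | forall y, ball (fst (fst i)) (snd (fst i)) y -> P (snd i) y}).
  destruct (V_cpt I (fun i y => locally y (ball (fst (fst (proj1_sig i))) (snd (fst (proj1_sig i))))))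
    as [l l_cover].
  - intros i y y_in. now apply locally_locally.
  - intros x Vx. destruct (P_loc x Vx) as [e [N P_ball]].
    exists (exist _ (x, e, N) P_ball). apply locally_ball.
  - exists (list_max (map (fun i : I => snd (proj1_sig i)) l)). intros y Vy.
    destruct (l_cover y Vy) as [i [i_in y_near]].
    apply P_mono with (snd (proj1_sig i)).
    + apply list_max_in, (in_map (fun i : I => snd (proj1_sig i))), i_in.
    + apply (proj2_sig i), (locally_singleton _ _ y_near).
Qed.

Lemma compact_bounded (V : C2 -> Prop) : is_compact V -> exists r, forall p, V p -> norm p <= r.
Proof.
  intros V_cpt.
  destruct (compact_uniform_index V (fun N y => norm y <= INR N) V_cpt) as [N V_le].
  - intros N N' y le y_le. apply le_INR in le. lra.
  - intros x _.
    destruct (INR_unbounded (norm x + norm_factor (K := C_AbsRing) (V := C2) * 1)) as [N N_gt].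
    exists (mkposreal 1 Rlt_0_1), N. intros y xy. pose proof (ball_norm_le x y _ xy). simpl in *. lra.
  - now exists (INR N).
Qed.

Lemma compact_cluster_point (V : C2 -> Prop) (u : nat -> C2) : is_compact V -> (forall n, V (u n)) ->
  exists q, V q /\ forall (e : posreal) (N : nat), exists n, (N <= n)%nat /\ ball q e (u n).
Proof.
  intros V_cpt Vu. apply NNPP. intro no_cluster.
  destruct (compact_uniform_index V (fun N y => forall n, (N <= n)%nat -> u n <> y) V_cpt)
    as [N u_avoids].
  - intros N N' y le avoid n le'. apply avoid. lia.
  - intros x Vx.
    assert (x_far : exists (e : posreal) (N : nat), forall n, (N <= n)%nat -> ~ ball x e (u n)).
    { apply NNPP. intro x_near. apply no_cluster. exists x. split; [exact Vx|].
      intros e N. apply NNPP. intro far. apply x_near. exists e, N.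
      intros n le near. apply far. now exists n. }
    destruct x_far as [e [N far]]. exists e, N. intros y xy n le u_y. apply (far n le). now rewrite u_y.
  - exact (u_avoids (u N) (Vu N) N (Nat.le_refl N) eq_refl).
Qed.

Lemma not_boundary_nbhd (A : C2 -> Prop) (p : C2) :
  ~ boundary A p -> exists e : posreal, forall q, ball p e q -> ~ boundary A q.
Proof.
  intros not_bd. apply not_all_ex_not in not_bd. destruct not_bd as [eps not_bd].
  assert (half : 0 < eps / 2) by (pose proof (cond_pos eps); lra).
  exists (mkposreal _ half). intros q pq q_bd. apply not_bd.
  destruct (q_bd (mkposreal _ half)) as [[q1 [qq1 A1]] [q2 [qq2 A2]]]. simpl in *.
  replace (pos eps) with (eps / 2 + eps / 2) by field.
  split; [exists q1 | exists q2]; split; try assumption; now apply ball_triangle with q.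
Qed.

Lemma continuous_iter (h : C2 -> C2) : (forall x, continuous h x) ->
  forall k x, continuous (Nat.iter k h) x.
Proof.
  intros h_cont k. induction k as [|k IH]; intro x; simpl.
  - now intros P HP.
  - apply (continuous_comp (Nat.iter k h) h); auto.
Qed.

Definition forward_invariant (f : C2 -> C2) (J V : C2 -> Prop) : Prop :=
  forall p, J p -> V p -> J (f p) /\ V (f p).

Lemma forward_invariant_iter (f : C2 -> C2) (J V : C2 -> Prop) : forward_invariant f J V ->
  forall n p, J p -> V p -> J (Nat.iter n f p) /\ V (Nat.iter n f p).
Proof.
  intros inv n. induction n as [|n IH]; intros p Jp Vp; simpl; [auto | apply inv; apply IH; auto].
Qed.

Section UniformEntrance.

Variables (f finv : C2 -> C2) (J : C2 -> Prop).
Hypothesis f_cont : forall x, continuous f x.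
Hypothesis finv_cont : forall x, continuous finv x.
Hypothesis finv_f : forall p, finv (f p) = p.

Lemma iter_finv_f (k : nat) (y : C2) : Nat.iter k finv (Nat.iter k f y) = y.
Proof.
  revert y. induction k as [|k IH]; intro y; [reflexivity|].
  rewrite Nat.iter_succ_r, Nat.iter_succ, finv_f. apply IH.
Qed.

Lemma cluster_point_bounded_orbits (p q : C2) (r : R) :
  (forall n, norm (Nat.iter n f p) <= r) ->
  (forall (e : posreal) (N : nat), exists n, (N <= n)%nat /\ ball q e (Nat.iter n f p)) ->
  bounded_orbit f q /\ bounded_orbit finv q.
Proof.
  intros orbit_le q_cluster.
  assert (near_orbit : forall h, (forall x, continuous h x) -> forall k,
    (forall n, (k <= n)%nat -> norm (Nat.iter k h (Nat.iter n f p)) <= r) ->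
    norm (Nat.iter k h q) <= r + norm_factor (K := C_AbsRing) (V := C2) * 1).
  { intros h h_cont k hk_le.
    destruct (continuous_iter h h_cont k q _ (locally_ball (Nat.iter k h q) (mkposreal 1 Rlt_0_1)))
      as [d hk_near].
    destruct (q_cluster d k) as [n [le qn]].
    pose proof (ball_norm_le _ _ _ (ball_sym _ _ _ (hk_near _ qn))) as hk_q. simpl in hk_q.
    eapply Rle_trans; [exact hk_q|]. apply Rplus_le_compat_r, hk_le, le. }
  split; eexists; intro k; apply near_orbit; auto; intros n le.
  - rewrite <- Nat.iter_add. apply orbit_le.
  - replace n with (k + (n - k))%nat by lia. rewrite Nat.iter_add, iter_finv_f. apply orbit_le.
Qed.

Variables V1 V2 : C2 -> Prop.
Hypothesis V1_cpt : is_compact V1.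
Hypothesis V1_inv : forward_invariant f J V1.
Hypothesis V2_inv : forward_invariant f J V2.
Hypothesis K_V2 : forall q, bounded_orbit f q -> bounded_orbit finv q -> interior V2 q.

(* A cluster point of the orbit of [p] lies in [K], hence in the interior of
   [V2]; by continuity of [f^N] the orbits of all points near [p] enter [V2]
   at the same time [N]. *)
Lemma entrance_time_nbhd (p : C2) : J p -> V1 p ->
  exists (d : posreal) (N : nat), forall y, ball p d y -> J y -> V1 y ->
    forall n, (N <= n)%nat -> J (Nat.iter n f y) /\ V2 (Nat.iter n f y).
Proof.
  intros Jp V1p.
  destruct (compact_bounded V1 V1_cpt) as [r V1_le].
  pose proof (forward_invariant_iter f J V1 V1_inv) as orbit.
  destruct (compact_cluster_point V1 (fun n => Nat.iter n f p) V1_cpt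
              (fun n => proj2 (orbit n p Jp V1p))) as [q [_ q_cluster]].
  destruct (cluster_point_bounded_orbits p q r (fun n => V1_le _ (proj2 (orbit n p Jp V1p))) q_cluster)
    as [fwd bwd].
  destruct (K_V2 q fwd bwd) as [eps q_int].
  assert (half : 0 < eps / 2) by (pose proof (cond_pos eps); lra).
  destruct (q_cluster (mkposreal _ half) 0%nat) as [N [_ qN]].
  destruct (continuous_iter f f_cont N p _ (locally_ball (Nat.iter N f p) (mkposreal _ half)))
    as [d fN_near].
  exists d, N. intros y py Jy V1y n le.
  assert (V2_fNy : V2 (Nat.iter N f y)).
  { apply q_int. replace (pos eps) with (eps / 2 + eps / 2) by field.
    apply ball_triangle with (Nat.iter N f p); [exact qN | apply fN_near, py]. }
  replace n with ((n - N) + N)%nat by lia. rewrite Nat.iter_add.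
  apply (forward_invariant_iter f J V2 V2_inv); [apply orbit; auto | exact V2_fNy].
Qed.

Hypothesis J_closed : forall p, ~ J p -> exists e : posreal, forall q, ball p e q -> ~ J q.

Lemma uniform_entrance_time :
  exists N, forall p, J p -> V1 p -> J (Nat.iter N f p) /\ V2 (Nat.iter N f p).
Proof.
  destruct (compact_uniform_index V1 (fun N y => J y -> V1 y ->
              forall n, (N <= n)%nat -> J (Nat.iter n f y) /\ V2 (Nat.iter n f y)) V1_cpt)
    as [N entered].
  - intros N N' y le entered Jy V1y n le'. apply entered; auto; lia.
  - intros x V1x. destruct (classic (J x)) as [Jx | not_Jx].
    + now apply entrance_time_nbhd.
    + destruct (J_closed x not_Jx) as [e far]. exists e, 0%nat. intros y xy Jy. now destruct (far y xy).
  - exists N. intros p Jp V1p. now apply entered.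
Qed.

End UniformEntrance.

(** * Growth of the derivatives along J *)

Definition der_norms (f : C2 -> C2) (J V : C2 -> Prop) (n : nat) (r : R) : Prop :=
  exists p, J p /\ V p /\ exists L : C2 -> C2,
    filterdiff (K := C_AbsRing) (Nat.iter n f) (locally p) L /\ r = real (opnorm L).

Lemma maxDer_der_norms (f : C2 -> C2) (J V : C2 -> Prop) (n : nat) :
  maxDer f J V n = real (Lub_Rbar (der_norms f J V n)).
Proof. reflexivity. Qed.

Section DerivativeGrowth.

Variables (f : C2 -> C2) (J : C2 -> Prop) (r m M : R).
Hypothesis m_pos : 0 < m.
Hypothesis M_pos : 0 < M.
Hypothesis f_pinched : forall q, norm q <= r -> diff_pinched f q m M.

Section OneSet.

Variable V : C2 -> Prop.
Hypothesis V_inv : forward_invariant f J V.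
Hypothesis V_le : forall p, V p -> norm p <= r.

Lemma iter_diff_pinched (n : nat) (p : C2) : J p -> V p ->
  diff_pinched (Nat.iter n f) p (m ^ n) (M ^ n).
Proof.
  revert p. induction n as [|n IH]; intros p Jp Vp.
  - exists (fun v => v). split; [apply filterdiff_id | intro; simpl; lra].
  - destruct (V_inv p Jp Vp) as [Jfp Vfp].
    apply diff_pinched_ext with (fun y => Nat.iter n f (f y)); [intro; symmetry; apply Nat.iter_succ_r|].
    change (m ^ S n) with (m * m ^ n). change (M ^ S n) with (M * M ^ n).
    rewrite (Rmult_comm m), (Rmult_comm M).
    apply diff_pinched_comp; [apply pow_le; lra | apply pow_le; lra | apply f_pinched, V_le, Vp | auto].
Qed.

Lemma iter_opnorm_bounds (n : nat) (p : C2) (L : C2 -> C2) : J p -> V p ->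
  filterdiff (Nat.iter n f) (locally p) L ->
  is_finite (opnorm L) /\ m ^ n <= real (opnorm L) <= M ^ n.
Proof.
  intros Jp Vp iter_L.
  pose proof (diff_pinched_derivative _ _ _ _ L (iter_diff_pinched n p Jp Vp) iter_L) as L_bd.
  destruct (opnorm_le L (M ^ n)) as [fin L_le]; [apply pow_le; lra | apply L_bd|].
  split; [exact fin | split; [apply opnorm_ge; [exact fin | apply L_bd] | exact L_le]].
Qed.

Lemma der_norms_inhabited (n : nat) (p : C2) : J p -> V p -> exists s, der_norms f J V n s.
Proof.
  intros Jp Vp. destruct (iter_diff_pinched n p Jp Vp) as [L [iter_L _]].
  exists (real (opnorm L)), p. repeat split; auto. now exists L.
Qed.

Lemma maxDer_bounds (n : nat) : (exists p, J p /\ V p) ->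
  is_finite (Lub_Rbar (der_norms f J V n)) /\ m ^ n <= maxDer f J V n <= M ^ n.
Proof.
  intros [p [Jp Vp]]. rewrite maxDer_der_norms.
  destruct (der_norms_inhabited n p Jp Vp) as [s s_in].
  destruct (Lub_Rbar_le_real (der_norms f J V n) (M ^ n)) as [fin le_M].
  - now exists s.
  - intros t [q [Jq [Vq [L [iter_L ->]]]]]. apply (iter_opnorm_bounds n q L Jq Vq iter_L).
  - split; [exact fin | split; [|exact le_M]].
    apply Rle_trans with s; [|now apply le_real_Lub_Rbar].
    destruct s_in as [q [Jq [Vq [L [iter_L ->]]]]]. apply (iter_opnorm_bounds n q L Jq Vq iter_L).
Qed.

End OneSet.

Lemma maxDer_shift_le (V1 V2 : C2 -> Prop) (N : nat) :
  forward_invariant f J V1 -> forward_invariant f J V2 ->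
  (forall p, V1 p -> norm p <= r) -> (forall p, V2 p -> norm p <= r) ->
  (forall p, J p -> V1 p -> J (Nat.iter N f p) /\ V2 (Nat.iter N f p)) ->
  (exists p, J p /\ V1 p) ->
  forall n, maxDer f J V1 (n + N) <= M ^ N * maxDer f J V2 n.
Proof.
  intros V1_inv V2_inv V1_le V2_le entrance [p0 [J0 V10]] n.
  assert (ne2 : exists p, J p /\ V2 p) by (exists (Nat.iter N f p0); auto).
  destruct (maxDer_bounds V2 V2_inv V2_le n ne2) as [fin2 [low2 _]].
  assert (max2_pos : 0 < maxDer f J V2 n) by (pose proof (pow_lt m n m_pos); lra).
  assert (max2_ge0 : 0 <= M ^ N * maxDer f J V2 n) by (pose proof (pow_lt M N M_pos); nra).
  rewrite maxDer_der_norms.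
  apply (Lub_Rbar_le_real _ _ (der_norms_inhabited V1 V1_inv V1_le (n + N) p0 J0 V10)).
  intros s [p [Jp [V1p [L [iter_L ->]]]]].
  destruct (entrance p Jp V1p) as [JfNp V2fNp].
  destruct (iter_diff_pinched V1 V1_inv V1_le N p Jp V1p) as [L1 [iterN_L1 L1_bd]].
  destruct (iter_diff_pinched V2 V2_inv V2_le n _ JfNp V2fNp) as [L2 [itern_L2 _]].
  assert (chain : forall v, L v = L2 (L1 v)).
  { apply (filterdiff_unique (Nat.iter (n + N) f) p); [exact iter_L|].
    apply filterdiff_ext with (fun y => Nat.iter n f (Nat.iter N f y));
      [intro; symmetry; apply Nat.iter_add|].
    now apply filterdiff_comp'. }
  assert (L2_le : real (opnorm L2) <= maxDer f J V2 n).
  { rewrite maxDer_der_norms. apply le_real_Lub_Rbar; [exact fin2|]. exists (Nat.iter N f p).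
    repeat split; auto. now exists L2. }
  destruct (iter_opnorm_bounds V2 V2_inv V2_le n _ L2 JfNp V2fNp itern_L2) as [fin_L2 _].
  apply opnorm_le; [exact max2_ge0|]. intro v. rewrite chain.
  eapply Rle_trans; [apply norm_le_opnorm; [apply itern_L2 | exact fin_L2]|].
  destruct (L1_bd v) as [_ L1v]. pose proof (norm_ge_0 (L1 v)).
  apply Rle_trans with (maxDer f J V2 n * norm (L1 v)); [apply Rmult_le_compat_r; lra|].
  rewrite (Rmult_comm (M ^ N)), Rmult_assoc. apply Rmult_le_compat_l; lra.
Qed.

End DerivativeGrowth.

(** * Growth rates of real sequences *)

Lemma LimSup_seq_plus_const (u : nat -> R) (c : R) :
  LimSup_seq (fun n => u n + c) = Rbar_plus (LimSup_seq u) c.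
Proof.
  destruct (ex_LimSup_seq u) as [l u_l]. rewrite (is_LimSup_seq_unique _ _ u_l).
  apply is_LimSup_seq_unique. destruct l as [l| |]; simpl in *.
  - intro eps. destruct (u_l eps) as [often [N ev]]. split.
    + intro N0. destruct (often N0) as [n [le lt]]. exists n. split; [exact le | lra].
    + exists N. intros n le. specialize (ev n le). lra.
  - intros K N. destruct (u_l (K - c) N) as [n [le lt]]. exists n. split; [exact le | lra].
  - intros K. destruct (u_l (K - c)) as [N ev]. exists N. intros n le. specialize (ev n le). lra.
Qed.

Lemma LimSup_seq_shift (u : nat -> R) (N : nat) : LimSup_seq (fun n => u (n + N)%nat) = LimSup_seq u.
Proof.
  destruct (ex_LimSup_seq u) as [l u_l]. rewrite (is_LimSup_seq_unique _ _ u_l).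
  now apply is_LimSup_seq_unique, is_LimSup_seq_ind_k.
Qed.

Lemma Rbar_le_plus_eps (A B : Rbar) :
  (forall eps : posreal, Rbar_le A (Rbar_plus B eps)) -> Rbar_le A B.
Proof.
  intros le_eps. destruct A as [a| |], B as [b| |]; simpl in *; auto;
    try exact (le_eps (mkposreal 1 Rlt_0_1)).
  apply Rnot_lt_le. intro lt. assert (half : 0 < (a - b) / 2) by lra.
  specialize (le_eps (mkposreal _ half)). simpl in le_eps. lra.
Qed.

Lemma LimSup_seq_le_shift (x y : nat -> R) (N1 N2 : nat) (K : R) :
  (forall n, (1 <= n)%nat -> x (n + N1)%nat <= y (n + N2)%nat + K / INR n) ->
  Rbar_le (LimSup_seq x) (LimSup_seq y).
Proof.
  intros x_le. rewrite <- (LimSup_seq_shift x N1), <- (LimSup_seq_shift y N2).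
  apply Rbar_le_plus_eps. intro eps. rewrite <- LimSup_seq_plus_const. apply LimSup_le.
  destruct (INR_unbounded (Rabs K / eps)) as [N0 N0_gt]. exists (S N0). intros n le.
  eapply Rle_trans; [apply x_le; lia|]. apply Rplus_le_compat_l.
  apply le_INR in le. rewrite S_INR in le. pose proof (pos_INR N0). pose proof (cond_pos eps).
  pose proof (Rle_abs K).
  assert (K_lt : Rabs K < eps * INR n).
  { apply Rlt_le_trans with (eps * INR N0); [|apply Rmult_le_compat_l; lra].
    apply Rmult_lt_reg_r with (/ eps); [now apply Rinv_0_lt_compat|].
    replace (eps * INR N0 * / eps) with (INR N0) by (field; lra). exact N0_gt. }
  apply Rle_div_l; lra.
Qed.

Lemma LimInf_seq_le_shift (x y : nat -> R) (N1 N2 : nat) (K : R) :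
  (forall n, (1 <= n)%nat -> x (n + N1)%nat <= y (n + N2)%nat + K / INR n) ->
  Rbar_le (LimInf_seq x) (LimInf_seq y).
Proof.
  intros x_le. apply Rbar_opp_le. rewrite <- !LimSup_seq_opp.
  apply (LimSup_seq_le_shift _ _ N2 N1 K). intros n n_ge. specialize (x_le n n_ge). lra.
Qed.

(* Division by [n + N] instead of [n] costs at most [N B / n] when [|v n| <= B n]. *)
Lemma rate_shift_bound (u v : nat -> R) (B c : R) (N : nat) :
  (forall n, Rabs (v n) <= B * INR n) -> (forall n, u (n + N)%nat <= c + v n) ->
  forall n, (1 <= n)%nat ->
    / INR (n + N) * u (n + N)%nat <= / INR n * v n + (Rabs c + INR N * B) / INR n.
Proof.
  intros v_le u_le n n_ge. rewrite plus_INR.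
  apply le_INR in n_ge. simpl in n_ge. pose proof (pos_INR N).
  specialize (v_le n). specialize (u_le n). pose proof (Rle_abs c).
  pose proof (Rle_abs (v n)). pose proof (Rle_abs (- v n)) as v_ge. rewrite Rabs_Ropp in v_ge.
  assert (B_ge0 : 0 <= B) by (pose proof (Rabs_pos (v n)); nra).
  set (nn := INR n) in *. set (NN := INR N) in *.
  apply Rmult_le_reg_l with (nn * (nn + NN)); [nra|].
  replace (nn * (nn + NN) * (/ (nn + NN) * u (n + N)%nat)) with (nn * u (n + N)%nat) by (field; lra).
  replace (nn * (nn + NN) * (/ nn * v n + (Rabs c + NN * B) / nn))
    with ((nn + NN) * (v n + Rabs c + NN * B)) by (field; lra).
  assert (NN * (v n + nn * B) >= 0) by nra.
  assert (NN * Rabs c >= 0) by (pose proof (Rabs_pos c); nra).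
  nra.
Qed.

Lemma growth_rate_le (u v : nat -> R) (B c : R) (N : nat) :
  (forall n, Rabs (v n) <= B * INR n) -> (forall n, u (n + N)%nat <= c + v n) ->
  Rbar_le (LimSup_seq (fun n => / INR n * u n)) (LimSup_seq (fun n => / INR n * v n)) /\
  Rbar_le (LimInf_seq (fun n => / INR n * u n)) (LimInf_seq (fun n => / INR n * v n)).
Proof.
  intros v_le u_le. pose proof (rate_shift_bound u v B c N v_le u_le) as shift.
  split; [apply (LimSup_seq_le_shift _ _ N 0 (Rabs c + INR N * B))
         | apply (LimInf_seq_le_shift _ _ N 0 (Rabs c + INR N * B))];
    intros n n_ge; rewrite Nat.add_0_r; now apply shift.
Qed.

Lemma growth_rate_eq (u v : nat -> R) (B c1 c2 : R) (N1 N2 : nat) :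
  (forall n, Rabs (u n) <= B * INR n) -> (forall n, Rabs (v n) <= B * INR n) ->
  (forall n, u (n + N1)%nat <= c1 + v n) -> (forall n, v (n + N2)%nat <= c2 + u n) ->
  Lim_seq (fun n => / INR n * u n) = Lim_seq (fun n => / INR n * v n).
Proof.
  intros u_le v_le uv vu.
  destruct (growth_rate_le u v B c1 N1 v_le uv) as [sup_uv inf_uv].
  destruct (growth_rate_le v u B c2 N2 u_le vu) as [sup_vu inf_vu].
  unfold Lim_seq. now rewrite (Rbar_le_antisym _ _ sup_uv sup_vu), (Rbar_le_antisym _ _ inf_uv inf_vu).
Qed.

Lemma ln_pow_bounds (a m M : R) (n : nat) : 0 < m -> 0 < M -> m ^ n <= a <= M ^ n ->
  Rabs (ln a) <= (Rabs (ln m) + Rabs (ln M)) * INR n.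
Proof.
  intros m_pos M_pos [lo hi]. assert (mn_pos : 0 < m ^ n) by now apply pow_lt.
  pose proof (ln_le _ _ mn_pos lo) as ln_lo.
  pose proof (ln_le _ _ (Rlt_le_trans _ _ _ mn_pos lo) hi) as ln_hi.
  rewrite ln_pow in ln_lo, ln_hi by lra. pose proof (pos_INR n).
  pose proof (Rle_abs (ln M)). pose proof (Rle_abs (- ln m)). rewrite Rabs_Ropp in *.
  pose proof (Rabs_pos (ln m)). pose proof (Rabs_pos (ln M)).
  apply Rabs_le. split; nra.
Qed.

(** * Independence of the admissible set *)

Lemma s_exp_empty (f : C2 -> C2) (J V1 V2 : C2 -> Prop) :
  (forall p, J p -> ~ V1 p) -> (forall p, J p -> ~ V2 p) -> s_exp f J V1 = s_exp f J V2.
Proof.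
  intros empty1 empty2. apply Lim_seq_ext. intro n. rewrite !maxDer_der_norms.
  rewrite (Lub_Rbar_eqset (der_norms f J V1 n) (der_norms f J V2 n)); [reflexivity|].
  intro s. split; intros [p [Jp [Vp _]]]; [destruct (empty1 p Jp Vp) | destruct (empty2 p Jp Vp)].
Qed.

Lemma s_exp_eq_of_entrance (f : C2 -> C2) (J V1 V2 : C2 -> Prop) (r m M : R) (N12 N21 : nat) :
  0 < m -> 0 < M -> (forall q, norm q <= r -> diff_pinched f q m M) ->
  forward_invariant f J V1 -> forward_invariant f J V2 ->
  (forall p, V1 p -> norm p <= r) -> (forall p, V2 p -> norm p <= r) ->
  (forall p, J p -> V1 p -> J (Nat.iter N12 f p) /\ V2 (Nat.iter N12 f p)) ->
  (forall p, J p -> V2 p -> J (Nat.iter N21 f p) /\ V1 (Nat.iter N21 f p)) ->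
  s_exp f J V1 = s_exp f J V2.
Proof.
  intros m_pos M_pos f_pinched V1_inv V2_inv V1_le V2_le enter12 enter21.
  destruct (classic (exists p, J p /\ V1 p)) as [ne1 | empty1].
  2: { apply s_exp_empty; intros p Jp Vp; apply empty1;
         [now exists p | exists (Nat.iter N21 f p); auto]. }
  assert (ne2 : exists p, J p /\ V2 p) by (destruct ne1 as [p [Jp Vp]]; exists (Nat.iter N12 f p); auto).
  assert (log_bounds : forall V, forward_invariant f J V -> (forall p, V p -> norm p <= r) ->
    (exists p, J p /\ V p) -> forall n,
    0 < maxDer f J V n /\ Rabs (ln (maxDer f J V n)) <= (Rabs (ln m) + Rabs (ln M)) * INR n).
  { intros V V_inv V_le ne n.
    destruct (maxDer_bounds f J r m M m_pos M_pos f_pinched V V_inv V_le n ne) as [_ bounds].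
    split; [pose proof (pow_lt m n m_pos); lra | now apply ln_pow_bounds]. }
  assert (log_shift : forall Va Vb N, forward_invariant f J Va -> forward_invariant f J Vb ->
    (forall p, Va p -> norm p <= r) -> (forall p, Vb p -> norm p <= r) ->
    (forall p, J p -> Va p -> J (Nat.iter N f p) /\ Vb (Nat.iter N f p)) -> (exists p, J p /\ Va p) ->
    forall n, ln (maxDer f J Va (n + N)) <= ln (M ^ N) + ln (maxDer f J Vb n)).
  { intros Va Vb N Va_inv Vb_inv Va_le Vb_le enter ne n. pose proof (pow_lt M N M_pos).
    destruct (log_bounds Va Va_inv Va_le ne (n + N)%nat) as [Va_pos _].
    assert (ne_b : exists p, J p /\ Vb p) by (destruct ne as [p [Jp Vp]]; exists (Nat.iter N f p); auto).
    destruct (log_bounds Vb Vb_inv Vb_le ne_b n) as [Vb_pos _].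
    rewrite <- ln_mult by auto. apply ln_le; [exact Va_pos|].
    now apply (maxDer_shift_le f J r m M m_pos M_pos f_pinched). }
  unfold s_exp.
  apply (growth_rate_eq _ _ (Rabs (ln m) + Rabs (ln M)) (ln (M ^ N12)) (ln (M ^ N21)) N12 N21).
  - intro n. apply (log_bounds V1 V1_inv V1_le ne1).
  - intro n. apply (log_bounds V2 V2_inv V2_le ne2).
  - now apply log_shift.
  - now apply log_shift.
Qed.

Lemma s_exp_independent (f finv : C2 -> C2) (J V1 V2 : C2 -> Prop) :
  locally_pinched f -> (forall x, continuous finv x) -> (forall p, finv (f p) = p) ->
  (forall p, ~ J p -> exists e : posreal, forall q, ball p e q -> ~ J q) ->
  is_compact V1 -> is_compact V2 -> forward_invariant f J V1 -> forward_invariant f J V2 ->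
  (forall q, bounded_orbit f q -> bounded_orbit finv q -> interior V1 q) ->
  (forall q, bounded_orbit f q -> bounded_orbit finv q -> interior V2 q) ->
  s_exp f J V1 = s_exp f J V2.
Proof.
  intros f_pin finv_cont finv_f J_closed V1_cpt V2_cpt V1_inv V2_inv K_V1 K_V2.
  pose proof (locally_pinched_continuous f f_pin) as f_cont.
  destruct (uniform_entrance_time f finv J f_cont finv_cont finv_f V1 V2
              V1_cpt V1_inv V2_inv K_V2 J_closed) as [N12 enter12].
  destruct (uniform_entrance_time f finv J f_cont finv_cont finv_f V2 V1
              V2_cpt V2_inv V1_inv K_V1 J_closed) as [N21 enter21].
  destruct (compact_bounded V1 V1_cpt) as [r1 V1_le], (compact_bounded V2 V2_cpt) as [r2 V2_le].
  destruct (proj2 f_pin (Rmax r1 r2)) as [m [M [m_pos [M_pos f_pinched]]]].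
  apply (s_exp_eq_of_entrance f J V1 V2 (Rmax r1 r2) m M N12 N21); auto.
  - intros p V1p. eapply Rle_trans; [apply V1_le, V1p | apply Rmax_l].
  - intros p V2p. eapply Rle_trans; [apply V2_le, V2p | apply Rmax_r].
Qed.

Theorem proposition5p1 (d : nat) (g ginv : C2 -> C2) :
  (2 <= d)%nat ->
  in_Hd d g ->
  (forall p, ginv (g p) = p /\ g (ginv p) = p) ->
  forall V1 V2 : C2 -> Prop,
    admissible g ginv V1 -> admissible g ginv V2 ->
    splus g ginv V1 = splus g ginv V2 /\ sminus g ginv V1 = sminus g ginv V2.
Proof.
  intros _ g_Hd g_inv V1 V2 [V1_cpt [K_V1 [Jp_V1 Jm_V1]]] [V2_cpt [K_V2 [Jp_V2 Jm_V2]]].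
  destruct (in_Hd_locally_pinched d g ginv g_Hd g_inv) as [g_pin ginv_pin].
  split.
  - apply (s_exp_independent g ginv); auto using locally_pinched_continuous.
    + intro p. apply g_inv.
    + intro p. apply not_boundary_nbhd.
    + intros q fwd bwd. apply K_V1. now split.
    + intros q fwd bwd. apply K_V2. now split.
  - apply (s_exp_independent ginv g); auto using locally_pinched_continuous.
    + intro p. apply g_inv.
    + intro p. apply not_boundary_nbhd.
    + intros q bwd fwd. apply K_V1. now split.
    + intros q bwd fwd. apply K_V2. now split.
Qed.
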